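(* Let $$\alpha=1+\frac16\left(\sqrt[3]{54-6\sqrt{33}}+\sqrt[3]{54+6\sqrt{33}}\right)\approx 2.1915,\qquad \beta=1+\frac13\left(\sqrt[3]{54-6\sqrt{33}}+\sqrt[3]{54+6\sqrt{33}}\right)\approx 3.3830,$$ let $g(x)=\alpha x(1-x)$, $h(x)=\beta x(1-x)$, and let $$p_\pm=\frac{\beta+1\pm\sqrt{(\beta+1)(\beta-3)}}{2\beta}$$ be the period-2 points of $h$. Then $h\!\left(\frac{\alpha-1}{\alpha}\right)=p_+$, $g(p_-)=\frac{\alpha-1}{\alpha}$, $g\!\left(\frac{\beta-1}{\beta}\right)=p_-$, $g\!\left(\frac1\beta\right)=p_-$, and $g(p_+)=\frac1\beta$. Consequently the set $\Lambda=\left\{\frac{\alpha-1}{\alpha},\ \frac{\beta-1}{\beta},\ p_-,\ p_+,\ \frac1\beta\right\}$ consists of five points, satisfies $\Lambda=g(\Lambda)\cup h(\Lambda)$ (a 5-point toss-and-catch), and contains the bridging point $\frac1\beta$, which is a periodic point of neither $g$ nor $h$.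
   Context: For $\gamma\in\mathbb{R}$ let $f_\gamma(x)=\gamma x(1-x)$ denote the logistic map; its nontrivial fixed point is $\frac{\gamma-1}{\gamma}$. The logistic IFS is the pair $\{g,h\}=\{f_\alpha,f_\beta\}$ with $\alpha<\beta$, where at each step $g$ is applied with probability $p\in(0,1)$ and $h$ with probability $1-p$, independently. An invariant set of the IFS is a set $\Lambda$ with $\Lambda=g(\Lambda)\cup h(\Lambda)$; a finite invariant set with $n$ points is called an $n$-point toss-and-catch. A bridging point is a point of $\Lambda$ that belongs to neither the union of all periodic orbits of $g$ nor the union of all periodic orbits of $h$. *)

From Stdlib Require Import Reals Lra List.
Open Scope R_scope.

Definition logistic (gamma x : R) : R := gamma * x * (1 - x).

(* real cube root of a positive real (both radicands below are positive) *)
Definition cbrt (x : R) : R := Rpower x (1/3).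

Definition S3 : R := cbrt (54 - 6 * sqrt 33) + cbrt (54 + 6 * sqrt 33).
Definition alpha0 : R := 1 + S3 / 6.
Definition beta0 : R := 1 + S3 / 3.

Definition pplus (b : R) : R := (b + 1 + sqrt ((b + 1) * (b - 3))) / (2 * b).
Definition pminus (b : R) : R := (b + 1 - sqrt ((b + 1) * (b - 3))) / (2 * b).

Definition periodic_point (f : R -> R) (x : R) : Prop :=
  exists n : nat, (0 < n)%nat /\ Nat.iter n f x = x.

Definition invariant_set (g h : R -> R) (L : list R) : Prop :=
  forall y, In y L <-> exists x, In x L /\ (y = g x \/ y = h x).

Definition bridging_point (g h : R -> R) (L : list R) (x : R) : Prop :=
  In x L /\ ~ periodic_point g x /\ ~ periodic_point h x.

From Stdlib Require Import Reals List Lra Psatz.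
Open Scope R_scope.

(* With t := alpha - 1 Cardano's formula says 2 t^3 = 2 t + 1, i.e. 2 (alpha - 1)^3 = beta
   where beta = 2 alpha - 1.  Modulo this cubic every claimed equation g(x) = y or h(x) = y
   is a polynomial identity in alpha.  The fixed point of h is the image of 1/beta, and the
   fixed point of g is reached from 1/beta via p_-; since 1/beta lies on neither fixed point,
   it is a strictly preperiodic, hence non-periodic, point of both maps. *)

Lemma cbrt_pow3 x : 0 < x -> cbrt x ^ 3 = x.
Proof.
  intros x_pos; unfold cbrt.
  rewrite <- Rpower_pow by apply exp_pos.
  rewrite Rpower_mult; replace (1 / 3 * INR 3) with 1 by (simpl; field).
  now apply Rpower_1.
Qed.

Lemma cbrt_mul x y : 0 < x -> 0 < y -> cbrt x * cbrt y = cbrt (x * y).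
Proof. intros; now apply Rpower_mult_distr. Qed.

Lemma cbrt_cube x : 0 < x -> cbrt (x ^ 3) = x.
Proof.
  intros x_pos; unfold cbrt.
  rewrite <- Rpower_pow, Rpower_mult by exact x_pos.
  replace (INR 3 * (1 / 3)) with 1 by (simpl; field).
  now apply Rpower_1.
Qed.

Lemma S3_cubic : S3 ^ 3 = 36 * S3 + 108.
Proof.
  assert (sqrt33_lt : sqrt 33 < 9).
  { rewrite <- (sqrt_pow2 9) by lra. apply sqrt_lt_1; lra. }
  assert (sqrt33_sq : sqrt 33 * sqrt 33 = 33) by (apply sqrt_sqrt; lra).
  pose proof (sqrt_pos 33).
  unfold S3; set (u := cbrt (54 - 6 * sqrt 33)); set (v := cbrt (54 + 6 * sqrt 33)).
  assert (u_cube : u ^ 3 = 54 - 6 * sqrt 33) by (apply cbrt_pow3; lra).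
  assert (v_cube : v ^ 3 = 54 + 6 * sqrt 33) by (apply cbrt_pow3; lra).
  assert (uv : u * v = 12).
  { unfold u, v; rewrite cbrt_mul by lra.
    replace ((54 - 6 * sqrt 33) * (54 + 6 * sqrt 33)) with (12 ^ 3) by nra.
    apply cbrt_cube; lra. }
  replace ((u + v) ^ 3) with (u ^ 3 + v ^ 3 + 3 * (u * v) * (u + v)) by ring.
  rewrite u_cube, v_cube, uv; ring.
Qed.

Lemma alpha0_cubic : 2 * (alpha0 - 1) ^ 3 = beta0.
Proof. unfold alpha0, beta0; pose proof S3_cubic; lra. Qed.

Lemma beta0_eq : beta0 = 2 * alpha0 - 1.
Proof. unfold alpha0, beta0; lra. Qed.

Lemma logistic_sym c x : logistic c (1 - x) = logistic c x.
Proof. unfold logistic; ring. Qed.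

Lemma logistic_fixed c : c <> 0 -> logistic c ((c - 1) / c) = (c - 1) / c.
Proof. intros c_neq0; unfold logistic; field; exact c_neq0. Qed.

Lemma logistic_inv c : c <> 0 -> logistic c (1 / c) = (c - 1) / c.
Proof. intros c_neq0; unfold logistic; field; exact c_neq0. Qed.

Lemma logistic_pplus c :
  c <> 0 -> 0 <= (c + 1) * (c - 3) -> logistic c (pplus c) = pminus c.
Proof.
  intros c_neq0 disc_ge0; unfold logistic, pplus, pminus.
  pose proof (sqrt_sqrt _ disc_ge0).
  field_simplify_eq; [nra | exact c_neq0].
Qed.

Lemma logistic_pminus c :
  c <> 0 -> 0 <= (c + 1) * (c - 3) -> logistic c (pminus c) = pplus c.
Proof.
  intros c_neq0 disc_ge0; unfold logistic, pplus, pminus.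
  pose proof (sqrt_sqrt _ disc_ge0).
  field_simplify_eq; [nra | exact c_neq0].
Qed.

Lemma periodic_point_image (f : R -> R) x :
  periodic_point f x -> periodic_point f (f x).
Proof.
  intros [n [n_pos iter_x]]; exists n; split; [exact n_pos|].
  rewrite <- Nat.iter_succ_r, Nat.iter_succ, iter_x; reflexivity.
Qed.

Lemma iter_fixed (f : R -> R) y n : f y = y -> Nat.iter n f y = y.
Proof.
  intros fy; induction n as [|n IH]; [reflexivity|].
  now rewrite Nat.iter_succ, IH.
Qed.

Lemma preperiodic_not_periodic (f : R -> R) x y :
  f x = y -> f y = y -> x <> y -> ~ periodic_point f x.
Proof.
  intros fx fy x_neq_y [[|n] [n_pos iter_x]]; [lia|].
  rewrite Nat.iter_succ_r, fx, iter_fixed in iter_x by exact fy.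
  now apply x_neq_y.
Qed.

Lemma invariant_setI (g h : R -> R) L :
  (forall x, In x L -> In (g x) L /\ In (h x) L) ->
  (forall y, In y L -> exists x, In x L /\ (y = g x \/ y = h x)) ->
  invariant_set g h L.
Proof.
  intros maps_into covered y; split; [apply covered|].
  intros [x [x_in [-> | ->]]]; apply maps_into, x_in.
Qed.

Lemma cubic_root_bounds t : 2 * t ^ 3 = 2 * t + 1 -> 1 < t < 5 / 4.
Proof.
  intros cubic.
  assert (t_gt1 : 1 < t).
  { destruct (Rlt_or_le 1 t) as [|t_le1]; [assumption|].
    destruct (Rle_or_lt t 0).
    - assert (0 <= - t * (t + 1 / 2) ^ 2) by (apply Rmult_le_pos; [lra | apply pow2_ge_0]).
      nra.
    - assert (0 <= t * (1 - t)) by (apply Rmult_le_pos; lra).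
      nra. }
  split; [exact t_gt1|].
  destruct (Rlt_or_le t (5 / 4)); [assumption | nra].
Qed.

Lemma Rdiv_lt_cross x y d e : 0 < d -> 0 < e -> x * e < y * d -> x / d < y / e.
Proof.
  intros d_pos e_pos cross; apply (Rmult_lt_reg_r (d * e)); [nra|].
  replace (x / d * (d * e)) with (x * e) by (field; lra).
  replace (y / e * (d * e)) with (y * d) by (field; lra).
  exact cross.
Qed.

Section TossAndCatch.

Variables a b : R.
Hypothesis beta_eq : b = 2 * a - 1.
Hypothesis alpha_cubic : 2 * (a - 1) ^ 3 = b.

Lemma alpha_bounds : 2 < a < 9 / 4.
Proof.
  assert (t_cubic : 2 * (a - 1) ^ 3 = 2 * (a - 1) + 1) by lra.
  pose proof (cubic_root_bounds (a - 1) t_cubic); lra.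
Qed.

(* (b + 1) (b - 3) = 4 a (a - 2), and the cubic says a = b^2 (a - 2). *)
Lemma beta_disc_sqrt : sqrt ((b + 1) * (b - 3)) = 2 * b * (a - 2).
Proof.
  pose proof alpha_bounds; apply sqrt_lem_1; subst b; nra.
Qed.

Lemma pplus_beta : pplus b = 2 * (a - 1) ^ 2 / b.
Proof.
  pose proof alpha_bounds; unfold pplus; rewrite beta_disc_sqrt.
  subst b; field; lra.
Qed.

Lemma pminus_beta : pminus b = 2 * (a - (a - 1) ^ 2) / b.
Proof.
  pose proof alpha_bounds; unfold pminus; rewrite beta_disc_sqrt.
  subst b; field; lra.
Qed.

Lemma logistic_beta_alpha_fixed : logistic b ((a - 1) / a) = pplus b.
Proof.
  pose proof alpha_bounds; rewrite pplus_beta; unfold logistic.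
  field_simplify_eq; [subst b; nra | lra].
Qed.

Lemma logistic_alpha_pminus : logistic a (pminus b) = (a - 1) / a.
Proof.
  pose proof alpha_bounds; rewrite pminus_beta; unfold logistic.
  field_simplify_eq; [subst b; nra | lra].
Qed.

Lemma logistic_alpha_inv_beta : logistic a (1 / b) = pminus b.
Proof.
  pose proof alpha_bounds; rewrite pminus_beta; unfold logistic.
  field_simplify_eq; [subst b; nra | lra].
Qed.

Lemma logistic_alpha_pplus : logistic a (pplus b) = 1 / b.
Proof.
  pose proof alpha_bounds; rewrite pplus_beta; unfold logistic.
  field_simplify_eq; [subst b; nra | lra].
Qed.

Lemma logistic_alpha_fixed_beta : logistic a ((b - 1) / b) = pminus b.
Proof.
  pose proof alpha_bounds.
  replace ((b - 1) / b) with (1 - 1 / b) by (field; lra).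
  now rewrite logistic_sym, logistic_alpha_inv_beta.
Qed.

Lemma toss_and_catch_sorted :
  1 / b < pminus b /\ pminus b < (a - 1) / a /\
  (a - 1) / a < (b - 1) / b /\ (b - 1) / b < pplus b.
Proof.
  pose proof alpha_bounds; rewrite pplus_beta, pminus_beta.
  repeat split.
  - apply (Rdiv_lt_cross _ _ b b); subst b; nra.
  - apply (Rdiv_lt_cross _ _ b a); subst b; nra.
  - apply (Rdiv_lt_cross _ _ a b); subst b; nra.
  - apply (Rdiv_lt_cross _ _ b b); subst b; nra.
Qed.

Lemma toss_and_catch_NoDup :
  NoDup ((a - 1) / a :: (b - 1) / b :: pminus b :: pplus b :: 1 / b :: nil).
Proof.
  pose proof toss_and_catch_sorted.
  repeat constructor; simpl; intuition lra.
Qed.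

Lemma toss_and_catch_invariant :
  invariant_set (logistic a) (logistic b)
    ((a - 1) / a :: (b - 1) / b :: pminus b :: pplus b :: 1 / b :: nil).
Proof.
  pose proof alpha_bounds.
  assert (a_neq0 : a <> 0) by lra.
  assert (b_neq0 : b <> 0) by lra.
  assert (disc_ge0 : 0 <= (b + 1) * (b - 3)) by (subst b; nra).
  pose proof (logistic_fixed a a_neq0) as g_fixed.
  pose proof (logistic_fixed b b_neq0) as h_fixed.
  pose proof (logistic_inv b b_neq0) as h_inv.
  pose proof (logistic_pplus b b_neq0 disc_ge0) as h_pplus.
  pose proof (logistic_pminus b b_neq0 disc_ge0) as h_pminus.
  pose proof logistic_beta_alpha_fixed as h_fixed_alpha.
  pose proof logistic_alpha_fixed_beta as g_fixed_beta.
  pose proof logistic_alpha_pminus as g_pminus.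
  pose proof logistic_alpha_pplus as g_pplus.
  pose proof logistic_alpha_inv_beta as g_inv.
  apply invariant_setI.
  2: intros y y_in; simpl in y_in;
     destruct y_in as [<- | [<- | [<- | [<- | [<- | []]]]]];
     [ exists ((a - 1) / a) | exists ((b - 1) / b) | exists ((b - 1) / b)
     | exists ((a - 1) / a) | exists (pplus b) ].
  1: intros x x_in; simpl in x_in;
     destruct x_in as [<- | [<- | [<- | [<- | [<- | []]]]]].
  all: rewrite ?g_fixed, ?h_fixed, ?h_inv, ?h_pplus, ?h_pminus, ?h_fixed_alpha,
         ?g_fixed_beta, ?g_pminus, ?g_pplus, ?g_inv; simpl; intuition.
Qed.

Lemma inv_beta_bridging :
  bridging_point (logistic a) (logistic b)
    ((a - 1) / a :: (b - 1) / b :: pminus b :: pplus b :: 1 / b :: nil) (1 / b).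
Proof.
  pose proof alpha_bounds; pose proof toss_and_catch_sorted.
  assert (a_neq0 : a <> 0) by lra.
  assert (b_neq0 : b <> 0) by lra.
  split; [simpl; tauto | split].
  - intros periodic; apply periodic_point_image in periodic.
    rewrite logistic_alpha_inv_beta in periodic.
    revert periodic; apply (preperiodic_not_periodic _ _ ((a - 1) / a)).
    + exact logistic_alpha_pminus.
    + now apply logistic_fixed.
    + lra.
  - apply (preperiodic_not_periodic _ _ ((b - 1) / b)).
    + now apply logistic_inv.
    + now apply logistic_fixed.
    + lra.
Qed.

End TossAndCatch.

Theorem mainTheorem3 :
  let a := alpha0 in
  let b := beta0 in
  let g := logistic a in
  let h := logistic b in
  let pp := pplus b in
  let pm := pminus b in
  let L := (a - 1) / a :: (b - 1) / b :: pm :: pp :: 1 / b :: nil in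
  h ((a - 1) / a) = pp /\
  g pm = (a - 1) / a /\
  g ((b - 1) / b) = pm /\
  g (1 / b) = pm /\
  g pp = 1 / b /\
  NoDup L /\
  invariant_set g h L /\
  bridging_point g h L (1 / b).
Proof.
  cbv zeta.
  pose proof beta0_eq as beta_eq; pose proof alpha0_cubic as alpha_cubic.
  refine (conj _ (conj _ (conj _ (conj _ (conj _ (conj _ (conj _ _))))))).
  - exact (logistic_beta_alpha_fixed _ _ beta_eq alpha_cubic).
  - exact (logistic_alpha_pminus _ _ beta_eq alpha_cubic).
  - exact (logistic_alpha_fixed_beta _ _ beta_eq alpha_cubic).
  - exact (logistic_alpha_inv_beta _ _ beta_eq alpha_cubic).
  - exact (logistic_alpha_pplus _ _ beta_eq alpha_cubic).
  - exact (toss_and_catch_NoDup _ _ beta_eq alpha_cubic).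
  - exact (toss_and_catch_invariant _ _ beta_eq alpha_cubic).
  - exact (inv_beta_bridging _ _ beta_eq alpha_cubic).
Qed.
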